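(* In the setting of the context, suppose that $\rho:=\rho_{\mathcal A_\nu,\mathcal S_{\log},\pi_{\log}}$ is quasi-convex and lower semicontinuous with respect to $\tau_{\log}$. Then for all $X\in\mathcal C$, $$\eta_{\mathfrak R}(X)=\sup_{\varphi\in\mathcal D}\ \inf\big\{\pi(Z):\ Z\in\mathcal S,\ W\in\mathcal B_{\tilde\rho},\ \varphi(W)\ge\varphi(X)-\varphi(Z)\big\},$$ where $\mathcal D$ is the set of all log-linear $\tau$-continuous maps $\varphi\colon\mathcal C\to\mathbb R$ (and $\inf\emptyset=\infty$).
   Context: Probability space $(\Omega,\mathcal F,P)$; $L^0_{++}$ = a.s. strictly positive random variables; $L^\infty_{++}=L^\infty\cap L^0_{++}$; $\frac{\mathcal A}{\mathcal D}=\{AD^{-1}\}$. Setting: nonempty $\mathcal C,\mathcal S,\mathcal K\subset L^0_{++}$ with $\frac{\mathcal C}{\mathcal S}\subset\mathcal K$, $\mathcal K$ a cone, $(\mathcal C,\cdot)$ a group, and (so that all expressions are defined) $\mathcal K\subset\mathcal C$ and $\mathcal S\subset\mathcal C$; pricing map $\pi\colon\mathcal S\to(0,\infty)$. $\mathcal C_{\log},\mathcal S_{\log},\mathcal K_{\log}$ are the images under $\log$. $\mathcal C_{\log}$ is equipped with a topology $\tau_{\log}$ making it a locally convex topological vector space; $\mathcal C$ carries $\tau=\{\exp(U):U\in\tau_{\log}\}$. A map $\varphi\colon\mathcal C\to\mathbb R$ is log-linear if $\varphi(X^\alpha Y^\beta)=\alpha\varphi(X)+\beta\varphi(Y)$ for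 $X,Y\in\mathcal C$, $\alpha,\beta\in\mathbb R$; the log-linear $\tau$-continuous maps are exactly $\psi\circ\log$ with $\psi$ in the topological dual of $\mathcal C_{\log}$. A return risk measure (RRM), with $L^\infty_{++}\subset\mathcal K$, is a positively homogeneous nondecreasing $\tilde\rho\colon\mathcal K\to(0,\infty)$ with $\tilde\rho(1)=1$; $\mathcal B_{\tilde\rho}=\{K\in\mathcal K:\tilde\rho(K)\le1\}$; $\mathfrak R=(\mathcal B_{\tilde\rho},\mathcal S,\pi)$; MARRM $\eta_{\mathfrak R}(X)=\inf\{\pi(Z):Z\in\mathcal S,\ X/Z\in\mathcal B_{\tilde\rho}\}$. Further $\nu=\log\circ\tilde\rho\circ\exp$, $\mathcal A_\nu=\{Y\in\mathcal K_{\log}:\nu(Y)\le0\}$, $\pi_{\log}=\log\circ\pi\circ\exp$ on $\mathcal S_{\log}$, and $\rho_{\mathcal A_\nu,\mathcal S_{\log},\pi_{\log}}(X_{\log})=\inf\{\pi_{\log}(L):L\in\mathcal S_{\log},\ X_{\log}-L\in\mathcal A_\nu\}$ on $\mathcal C_{\log}$. Quasi-convex: $\rho(\alpha Y_1+(1-\alpha)Y_2)\le\max\{\rho(Y_1),\rho(Y_2)\}$. Conventions $\exp(-\infty)=0$, $\exp(\infty)=\infty$. *)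

From HB Require Import structures.
From mathcomp Require Import all_boot all_order all_algebra generic_quotient.
From mathcomp Require Import all_classical all_reals all_analysis.
Set Implicit Arguments. Unset Strict Implicit. Unset Printing Implicit Defensive.
Import Order.TTheory GRing.Theory Num.Theory.
Import numFieldNormedType.Exports.
Local Open Scope classical_set_scope.
Local Open Scope quotient_scope.
Local Open Scope ring_scope.

(* L^0(Omega, F, P): classes of measurable real functions modulo P-a.s.     *)
(* equality (mathcomp-analysis' {mfun_ P, Omega >-> R}).  An element X is    *)
(* applied to an outcome w through a representative (coercion repr).        *)
Section L0.
Context d (Omega : measurableType d) (R : realType) (P : probability Omega R).

Definition L0 : Type := {mfun_ P, Omega >-> R}.
Definition evL0 (X : L0) : Omega -> R := aqEqMfun_to_fun X.
Coercion evL0 : L0 >-> Funclass.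

(* the class of a function f (only used for measurable f, where it is the   *)
(* class of f; for non-measurable f it is an irrelevant default)            *)
Definition liftL0 (f : Omega -> R) : L0 :=
  \pi_(L0) (insubd (cst 0 : {mfun Omega >-> R}) f).

Definition oneL0 : L0 := liftL0 (cst 1).
Definition mulL0 (X Y : L0) : L0 := liftL0 (fun w => X w * Y w).
Definition invL0 (X : L0) : L0 := liftL0 (fun w => (X w)^-1).
Definition divL0 (X Y : L0) : L0 := liftL0 (fun w => X w / Y w).
Definition sclL0 (a : R) (X : L0) : L0 := liftL0 (fun w => a * X w).
Definition subL0 (X Y : L0) : L0 := liftL0 (fun w => X w - Y w).
Definition lincombL0 (a : R) (Y1 : L0) (b : R) (Y2 : L0) : L0 :=
  liftL0 (fun w => a * Y1 w + b * Y2 w).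
Definition powmulL0 (X : L0) (a : R) (Y : L0) (b : R) : L0 :=
  liftL0 (fun w => X w `^ a * Y w `^ b).
Definition logL0 (X : L0) : L0 := liftL0 (fun w => ln (X w)).
Definition expL0 (Y : L0) : L0 := liftL0 (fun w => expR (Y w)).

Definition leL0 (X Y : L0) : Prop := {ae P, forall w, X w <= Y w}.

Definition L0pp : set L0 := [set X : L0 | {ae P, forall w, 0 < X w}].
Definition Linfpp : set L0 :=
  [set X : L0 | (exists M : R, {ae P, forall w, `|X w| <= M}) /\ L0pp X].

Definition mul_group (C : set L0) : Prop :=
  [/\ C oneL0,
      (forall X Y, C X -> C Y -> C (mulL0 X Y)) &
      (forall X, C X -> C (invL0 X))].

Definition is_cone (K : set L0) : Prop :=
  forall (a : R) X, 0 < a -> K X -> K (sclL0 a X).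

Definition setting (C S K : set L0) (pi : L0 -> R) : Prop :=
  [/\ [/\ C !=set0, S !=set0 & K !=set0],
      [/\ C `<=` L0pp, S `<=` L0pp & K `<=` L0pp],
      (forall X Z, C X -> S Z -> K (divL0 X Z)),
      [/\ is_cone K, mul_group C, K `<=` C & S `<=` C] &
      (forall Z, S Z -> 0 < pi Z)].

Definition RRM (K : set L0) (rt : L0 -> R) : Prop :=
  [/\ Linfpp `<=` K,
      (forall X, K X -> 0 < rt X),
      (forall (a : R) X, 0 < a -> K X -> rt (sclL0 a X) = a * rt X),
      (forall X Y, K X -> K Y -> leL0 X Y -> rt X <= rt Y) &
      rt oneL0 = 1].

Definition Bset (K : set L0) (rt : L0 -> R) : set L0 :=
  [set X | K X /\ rt X <= 1].

Local Open Scope ereal_scope.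

Definition MARRM (S : set L0) (pi : L0 -> R) (K : set L0) (rt : L0 -> R)
    (X : L0) : \bar R :=
  ereal_inf [set (pi Z)%:E | Z in [set Z | S Z /\ Bset K rt (divL0 X Z)]].

Definition logset (A : set L0) : set L0 := logL0 @` A.
Definition nu (rt : L0 -> R) (Y : L0) : R := ln (rt (expL0 Y)).
Definition Anu (K : set L0) (rt : L0 -> R) : set L0 :=
  [set Y | logset K Y /\ (nu rt Y <= 0)%R].
Definition pilog (pi : L0 -> R) (L : L0) : R := ln (pi (expL0 L)).
Definition rhoA (K : set L0) (rt : L0 -> R) (S : set L0) (pi : L0 -> R)
    (Xl : L0) : \bar R :=
  ereal_inf [set (pilog pi L)%:E |
             L in [set L | logset S L /\ Anu K rt (subL0 Xl L)]].

Local Close Scope ereal_scope.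

(* tau_log: C_log carries the topology of a locally convex tvs V, via a
   linear bijection iota : V -> C_log (pointwise linear structure) *)
Definition log_topology (C : set L0) (V : tvsType R) (iota : V -> L0) : Prop :=
  [/\ injective iota,
      range iota = logset C &
      (forall (a : R) (u v : V),
          iota (a *: u + v) = lincombL0 a (iota u) 1 (iota v))].

Definition quasi_convex_on (Clog : set L0) (rho : L0 -> \bar R) : Prop :=
  forall Y1 Y2 (a : R), Clog Y1 -> Clog Y2 -> 0 <= a <= 1 ->
    (rho (lincombL0 a Y1 (1 - a) Y2) <= maxe (rho Y1) (rho Y2))%E.

Definition log_linear (C : set L0) (phi : L0 -> R) : Prop :=
  forall X Y (a b : R), C X -> C Y ->
    phi (powmulL0 X a Y b) = a * phi X + b * phi Y.

(* D: log-linear tau-continuous maps C -> R, where tau = exp(tau_log), i.e.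
   phi is tau-continuous iff v |-> phi (exp (iota v)) is continuous on V *)
Definition Dset (C : set L0) (V : tvsType R) (iota : V -> L0) : set (L0 -> R) :=
  [set phi | log_linear C phi /\
             continuous (fun v : V => phi (expL0 (iota v)))].

End L0.

(* The inequality "sup <= eta" is immediate: for a log-linear phi,
   every Z admissible for eta(X) is admissible in the inner infimum with
   W = X/Z.  Conversely, let 0 < m < eta(X).  In the log-space V the sublevel
   set {v | rho(iota v) <= ln m} is convex by quasi-convexity of rho, and by
   lower semicontinuity it misses a neighbourhood of the point representing
   log X.  A continuous linear functional psi strictly separating the two
   (Minkowski functional + Hahn-Banach in the locally convex space V) gives
   phi = psi o log in D; for any Z, W feasible for phi the point log(ZW) lies
   outside the sublevel set, while rho(log(ZW)) <= ln(pi Z), so m <= pi Z. *)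

From HB Require Import structures.
From mathcomp Require Import all_boot all_order all_algebra generic_quotient.
From mathcomp Require Import all_classical all_reals all_analysis.
From mathcomp Require Import measurable_realfun lra.
Import Order.TTheory GRing.Theory Num.Theory.
Import numFieldNormedType.Exports.
Set Implicit Arguments. Unset Strict Implicit. Unset Printing Implicit Defensive.
Local Open Scope classical_set_scope.
Local Open Scope ring_scope.

Lemma measurable_invr (R : realType) : measurable_fun [set: R] (fun x : R => x^-1).
Proof.
have open0C : open (~` [set 0 : R]).
  exact/closed_openC/accessible_closed_set1/hausdorff_accessible/Rhausdorff.
rewrite -(setvU [set 0]); apply/measurable_funU.
- exact: open_measurable.
- exact: measurable_set1.
split; last exact: measurable_fun_set1.
apply: open_continuous_measurable_fun => // x; rewrite inE /= => /eqP x0.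
exact: inv_continuous.
Qed.

Section L0_calculus.
Context d (Omega : measurableType d) (R : realType) (P : probability Omega R).
Local Open Scope quotient_scope.
Local Notation L0 := (L0 P).
Implicit Types (X Y Z W : L0) (f : Omega -> R).

Lemma measurable_evL0 X : measurable_fun setT (X : Omega -> R).
Proof. exact: measurable_funPT. Qed.
Local Hint Resolve measurable_evL0 : core.

Lemma eqL0_ae X Y : {ae P, forall w, X w = Y w} -> X = Y.
Proof.
move=> XY; rewrite -[X]reprK -[Y]reprK; apply/eqmodP.
by apply/asboolP; apply: filterS XY => w + _.
Qed.

Lemma liftL0E_ae f : measurable_fun setT f -> {ae P, forall w, liftL0 P f w = f w}.
Proof.
move=> mf; rewrite /liftL0 /evL0 /aqEqMfun_to_fun.
have gf : (insubd (cst 0 : {mfun Omega >-> R}) f : Omega -> R) = f.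
  by rewrite insubdK // inE.
have /eqP := reprK (\pi_(L0) (insubd (cst 0 : {mfun Omega >-> R}) f) : L0).
by rewrite eqmodE => /asboolP; rewrite gf; apply: filterS => w; apply.
Qed.

Lemma logL0E_ae X : {ae P, forall w, logL0 X w = ln (X w)}.
Proof. exact/liftL0E_ae/(measurableT_comp (@measurable_ln R)). Qed.

Lemma expL0E_ae Y : {ae P, forall w, expL0 Y w = expR (Y w)}.
Proof. exact/liftL0E_ae/(measurableT_comp (@measurable_expR R)). Qed.

Lemma mulL0E_ae X Y : {ae P, forall w, mulL0 X Y w = X w * Y w}.
Proof. exact/liftL0E_ae/measurable_funM. Qed.

Lemma divL0E_ae X Y : {ae P, forall w, divL0 X Y w = X w / Y w}.
Proof.
by apply/liftL0E_ae/measurable_funM => //; exact: (measurableT_comp (@measurable_invr R)).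
Qed.

Lemma subL0E_ae X Y : {ae P, forall w, subL0 X Y w = X w - Y w}.
Proof. exact/liftL0E_ae/measurable_funB. Qed.

Lemma lincombL0E_ae a X b Y :
  {ae P, forall w, lincombL0 a X b Y w = a * X w + b * Y w}.
Proof. by apply/liftL0E_ae/measurable_funD; apply: measurable_funM. Qed.

Lemma powmulL0E_ae X a Y b :
  {ae P, forall w, powmulL0 X a Y b w = X w `^ a * Y w `^ b}.
Proof.
by apply/liftL0E_ae/measurable_funM; exact: (measurableT_comp (@measurable_powR R _)).
Qed.

Lemma logL0K X : L0pp X -> expL0 (logL0 X) = X.
Proof.
move=> Xpp; apply: eqL0_ae; near=> w.
rewrite (near (expL0E_ae _) w) // (near (logL0E_ae X) w) // lnK // posrE.
exact: (near Xpp w).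
Unshelve. all: by end_near. Qed.

Lemma expL0K Y : logL0 (expL0 Y) = Y.
Proof.
apply: eqL0_ae; near=> w.
by rewrite (near (logL0E_ae _) w) // (near (expL0E_ae _) w) // expRK.
Unshelve. all: by end_near. Qed.

Lemma logL0_inj X Y : L0pp X -> L0pp Y -> logL0 X = logL0 Y -> X = Y.
Proof. by move=> Xpp Ypp XY; rewrite -(logL0K Xpp) -(logL0K Ypp) XY. Qed.

Lemma powmulL0_div X Z : L0pp X -> L0pp Z -> powmulL0 X 1 Z (-1) = divL0 X Z.
Proof.
move=> Xpp Zpp; apply: eqL0_ae; near=> w.
rewrite (near (powmulL0E_ae _ _ _ _) w) // (near (divL0E_ae _ _) w) //.
rewrite powRr1; last exact/ltW/(near Xpp w).
by rewrite powRN powRr1 //; exact/ltW/(near Zpp w).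
Unshelve. all: by end_near. Qed.

Lemma logL0_powmul_ae X a Y b : L0pp X -> L0pp Y ->
  {ae P, forall w, logL0 (powmulL0 X a Y b) w = a * logL0 X w + b * logL0 Y w}.
Proof.
move=> Xpp Ypp; near=> w.
have X0 : 0 < X w by exact: (near Xpp w).
have Y0 : 0 < Y w by exact: (near Ypp w).
rewrite (near (logL0E_ae _) w) // (near (logL0E_ae X) w) // (near (logL0E_ae Y) w) //.
by rewrite (near (powmulL0E_ae _ _ _ _) w) // lnM ?posrE ?powR_gt0 // !ln_powR.
Unshelve. all: by end_near. Qed.

Lemma logL0_div X Z : L0pp X -> L0pp Z ->
  logL0 (divL0 X Z) = subL0 (logL0 X) (logL0 Z).
Proof.
move=> Xpp Zpp; rewrite -powmulL0_div //; apply: eqL0_ae; near=> w.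
rewrite (near (subL0E_ae _ _) w) // (near (logL0_powmul_ae _ _ Xpp Zpp) w) //.
by rewrite mul1r mulN1r.
Unshelve. all: by end_near. Qed.

Lemma logL0_mul_ae Z W : L0pp Z -> L0pp W ->
  {ae P, forall w, logL0 (mulL0 Z W) w = logL0 Z w + logL0 W w}.
Proof.
move=> Zpp Wpp; near=> w.
have Z0 : 0 < Z w by exact: (near Zpp w).
have W0 : 0 < W w by exact: (near Wpp w).
rewrite (near (logL0E_ae _) w) // (near (logL0E_ae Z) w) // (near (logL0E_ae W) w) //.
by rewrite (near (mulL0E_ae _ _) w) // lnM.
Unshelve. all: by end_near. Qed.

Lemma logL0_mulKl Z W : L0pp Z -> L0pp W ->
  subL0 (logL0 (mulL0 Z W)) (logL0 Z) = logL0 W.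
Proof.
move=> Zpp Wpp; apply: eqL0_ae; near=> w.
rewrite (near (subL0E_ae _ _) w) // (near (logL0_mul_ae Zpp Wpp) w) //.
by rewrite addrC addKr.
Unshelve. all: by end_near. Qed.

End L0_calculus.

Lemma convex_setP (R : numDomainType) (M : lmodType R) (A : set M) :
  convex_set (A : set (convex_lmodType M)) <->
  (forall x y (t : R), A x -> A y -> 0 <= t <= 1 -> A (t *: x + (1 - t) *: y)).
Proof.
split => [Ac x y t Ax Ay /andP[t0 t1]|Ac x y t].
  by have := Ac x y (Itv01 t0 t1) (mem_set Ax) (mem_set Ay); rewrite inE.
by rewrite !inE => Ax Ay; apply: Ac => //; rewrite ge0 le1.
Qed.

Section minkowski_functional.
Context (R : realType) (V : lmodType R) (E : set V).
Hypothesis E0 : E 0.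
Hypothesis E_convex : convex_set (E : set (convex_lmodType V)).
Hypothesis E_absorbing : forall x, exists2 s : R, 0 < s & E (s *: x).

Let Econv := (convex_setP E).1 E_convex.

Definition minkowski_set (x : V) := [set t : R | 0 < t /\ E (t^-1 *: x)].
Definition minkowski (x : V) : R := inf (minkowski_set x).

Let minkowski_set_neq0 x : minkowski_set x !=set0.
Proof.
have [s s0 Es] := E_absorbing x; exists s^-1.
by split; rewrite ?invr_gt0 ?invrK.
Qed.

Let minkowski_set_lb x : has_lbound (minkowski_set x).
Proof. by exists 0 => t [/ltW]. Qed.

Lemma minkowski_ge0 x : 0 <= minkowski x.
Proof. by apply: lb_le_inf => // t [/ltW]. Qed.

Lemma minkowski_le x t : minkowski_set x t -> minkowski x <= t.
Proof. by move=> xt; exact: ge_inf. Qed.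

Lemma minkowski_le1 x : E x -> minkowski x <= 1.
Proof. by move=> Ex; apply: minkowski_le; split; rewrite ?invr1 ?scale1r. Qed.

Lemma minkowski0 : minkowski 0 = 0.
Proof.
apply/eqP; rewrite eq_le minkowski_ge0 andbT.
apply/ler_addgt0Pr => e e0; rewrite add0r; apply: minkowski_le.
by split; rewrite ?scaler0.
Qed.

Lemma minkowskiZ s x : 0 < s -> minkowski (s *: x) <= s * minkowski x.
Proof.
move=> s0; rewrite -ler_pdivrMl //; apply: lb_le_inf => // t [t0 Et].
rewrite ler_pdivrMl //; apply: minkowski_le; split; first exact: mulr_gt0.
by rewrite scalerA invfM mulrAC mulVf ?gt_eqF // mul1r.
Qed.

Lemma minkowskiD x y : minkowski (x + y) <= minkowski x + minkowski y.
Proof.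
apply/ler_addgt0Pr => e e0.
have e20 : 0 < e / 2 by rewrite divr_gt0.
have [a [a0 Ea] ha] := inf_adherent e20 (conj (minkowski_set_neq0 x) (minkowski_set_lb x)).
have [b [b0 Eb] hb] := inf_adherent e20 (conj (minkowski_set_neq0 y) (minkowski_set_lb y)).
have ab0 : 0 < a + b by rewrite addr_gt0.
apply: (@le_trans _ _ (a + b)); last by rewrite (splitr e) addrACA lerD // ltW.
apply: minkowski_le; split => //.
have -> : (a + b)^-1 *: (x + y) =
    (a / (a + b)) *: (a^-1 *: x) + (1 - a / (a + b)) *: (b^-1 *: y).
  have -> : 1 - a / (a + b) = b / (a + b).
    by apply: (mulIf (lt0r_neq0 ab0)); rewrite mulrBl !divfK ?gt_eqF // mul1r; lra.
  rewrite !scalerA mulrAC mulfV ?gt_eqF // mul1r mulrAC mulfV ?gt_eqF //.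
  by rewrite mul1r scalerDr.
apply: Econv => //; apply/andP; split; first by rewrite divr_ge0 // ltW.
by rewrite ler_pdivrMr // mul1r lerDl ltW.
Qed.

Lemma minkowski_ge1 x : ~ E x -> 1 <= minkowski x.
Proof.
move=> Ex; apply: lb_le_inf => // t [t0 Et]; rewrite leNgt; apply/negP => t1.
apply: Ex; have := Econv (t := t) Et E0.
rewrite scaler0 addr0 scalerA mulfV ?gt_eqF // scale1r; apply.
by rewrite !ltW.
Qed.

End minkowski_functional.

Section hahn_banach.
Context (R : realType) (V : lmodType R) (p : V -> R) (q : V).
Hypothesis p_ge0 : forall x, 0 <= p x.
Hypothesis p0 : p 0 = 0.
Hypothesis pZ : forall s x, 0 < s -> p (s *: x) <= s * p x.
Hypothesis pD : forall x y, p (x + y) <= p x + p y.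
Hypothesis pq : 1 <= p q.

(* Graphs of p-dominated linear functionals defined on a subspace and taking
   the value 1 at q; Zorn's lemma is applied to these sets of pairs. *)
Definition dominated_graph (G : set (V * R)) :=
  [/\ (forall a x y r s, G (x, r) -> G (y, s) -> G (a *: x + y, a * r + s)),
      (forall x r, G (x, r) -> r <= p x) & G (q, 1)].

Lemma dominated_graph00 G : dominated_graph G -> G (0, 0).
Proof.
case=> Glin _ Gq; have := Glin (-1) _ _ _ _ Gq Gq.
by rewrite scaleN1r addNr mulN1r addNr.
Qed.

Lemma dominated_graph_functional G x r s :
  dominated_graph G -> G (x, r) -> G (x, s) -> r = s.
Proof.
move=> [Glin Gp _] Gr Gs.
have := Gp _ _ (Glin (-1) _ _ _ _ Gr Gs); have := Gp _ _ (Glin (-1) _ _ _ _ Gs Gr).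
rewrite scaleN1r addNr p0 !mulN1r; lra.
Qed.

Let pZV s x : 0 < s -> s * p (s^-1 *: x) <= p x.
Proof.
move=> s0; have s'0 : 0 < s^-1 by rewrite invr_gt0.
by rewrite -(ler_pM2l s'0) mulrA mulVf ?gt_eqF // mul1r; exact: pZ.
Qed.

Lemma dominated_graph_line : dominated_graph [set z | exists t, z = (t *: q, t)].
Proof.
split.
- move=> a _ _ _ _ [t1 [-> ->]] [t2 [-> ->]].
  by exists (a * t1 + t2); rewrite scalerDl scalerA.
- move=> _ _ [t [-> ->]].
  have [t0|t0] := leP t 0; first exact: le_trans t0 (p_ge0 _).
  have := pZV (t *: q) t0; rewrite scalerA mulVf ?gt_eqF // scale1r.
  by apply: le_trans; rewrite -{1}[t]mulr1 ler_pM2l.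
- by exists 1; rewrite scale1r.
Qed.

(* Any c between the two bounds makes x + t *: y |-> r + t * c dominated by p. *)
Lemma dominated_extension_value A y : dominated_graph A ->
  exists c, (forall x r, A (x, r) -> r - p (x - y) <= c) /\
            (forall x s, A (x, s) -> c <= p (x + y) - s).
Proof.
move=> GA; have A00 := dominated_graph00 GA; case: GA => Alin Ap _.
have sep x r x' s : A (x, r) -> A (x', s) -> r - p (x - y) <= p (x' + y) - s.
  move=> Ax Ax'; have := Ap _ _ (Alin 1 _ _ _ _ Ax Ax'); rewrite scale1r mul1r.
  have := pD (x - y) (x' + y); rewrite addrACA addNr addr0; lra.
pose lower := [set a | exists x r, A (x, r) /\ a = r - p (x - y)].
have lower_ne : lower !=set0 by exists (0 - p (0 - y)), 0, 0.
have lower_ub : has_ubound lower by exists (p (0 + y) - 0) => _ [x [r [Ax ->]]]; exact: sep.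
exists (sup lower); split => [x r Ax|x s Ax].
- by apply: ub_le_sup => //; exists x, r.
- by apply: ge_sup => // _ [x' [r [Ax' ->]]]; exact: sep.
Qed.

Lemma dominated_graph_extend A y : dominated_graph A -> ~ (exists r, A (y, r)) ->
  exists B, A `<` B /\ dominated_graph B.
Proof.
move=> GA Ay; have A00 := dominated_graph00 GA.
have [c [c_lb c_ub]] := dominated_extension_value y GA.
case: GA => Alin Ap Aq.
pose B := [set z | exists x r t, A (x, r) /\ z = (x + t *: y, r + t * c)].
exists B; split; first split.
- by move=> [x r] Ax; exists x, r, 0; rewrite scale0r mul0r !addr0.
- move=> BA; apply: Ay; exists c; apply: BA; exists 0, 0, 1.
  by rewrite scale1r mul1r !add0r.
split.
- move=> a _ _ _ _ [x1 [r1 [t1 [A1 [-> ->]]]]] [x2 [r2 [t2 [A2 [-> ->]]]]].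
  exists (a *: x1 + x2), (a * r1 + r2), (a * t1 + t2); split; first exact: Alin.
  congr (_, _); first by rewrite scalerDr scalerA scalerDl addrACA.
  by rewrite mulrDr mulrDl mulrA addrACA.
- move=> _ _ [x [r [t [Ax [-> ->]]]]].
  have Atx s : A (s^-1 *: x, s^-1 * r).
    by have := Alin s^-1 _ _ _ _ Ax A00; rewrite !addr0.
  have [t0|t0|->] := ltgtP t 0; last by rewrite scale0r mul0r !addr0; exact: Ap.
  + have s0 : 0 < - t by rewrite oppr_gt0.
    have := pZV (x + t *: y) s0; apply: le_trans.
    have -> : (- t)^-1 *: (x + t *: y) = (- t)^-1 *: x - y.
      by rewrite scalerDr scalerA invrN mulNr mulVf ?lt_eqF // scaleN1r.
    have -> : r + t * c = - t * ((- t)^-1 * r - c).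
      by rewrite mulrBr mulrA mulfV ?gt_eqF // mul1r mulNr opprK.
    by rewrite ler_pM2l //; have := c_lb _ _ (Atx (- t)); lra.
  + have := pZV (x + t *: y) t0; apply: le_trans.
    rewrite scalerDr scalerA mulVf ?gt_eqF // scale1r.
    have -> : r + t * c = t * (t^-1 * r + c).
      by rewrite mulrDr mulrA mulfV ?gt_eqF // mul1r.
    by rewrite ler_pM2l //; have := c_ub _ _ (Atx t); lra.
- by exists q, 1, 0; rewrite scale0r mul0r !addr0.
Qed.

Lemma hahn_banach : exists F : {linear V -> R^o}, (forall x, F x <= p x) /\ F q = 1.
Proof.
have [A [A_good A_max]] : exists A, (A = set0 \/ dominated_graph A) /\
    forall B, A `<` B -> ~ (B = set0 \/ dominated_graph B).
  apply: Zorn_bigcup => F F_good F_chain.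
  have [[G0 [FG0 [z0 G0z]]]|F_empty] := pselect (exists G, F G /\ G !=set0); last first.
    left; apply/seteqP; split => // z [G FG Gz].
    by apply: F_empty; exists G; split => //; exists z.
  have good G z : F G -> G z -> dominated_graph G by move=> /F_good[->|].
  right; split.
  - move=> a x y r s [G1 FG1 G1r] [G2 FG2 G2s].
    have [G12|G21] := F_chain _ _ FG1 FG2.
    + case: (good _ _ FG2 G2s) => Glin _ _.
      by exists G2 => //; apply: Glin => //; exact: G12.
    + case: (good _ _ FG1 G1r) => Glin _ _.
      by exists G1 => //; apply: Glin => //; exact: G21.
  - by move=> x r [G FG Gr]; case: (good _ _ FG Gr) => _ Gp _; exact: Gp.
  - by case: (good _ _ FG0 G0z) => _ _ Gq; exists G0.
have GA : dominated_graph A.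
  case: A_good => // A0; exfalso; apply: (A_max _ _ (or_intror dominated_graph_line)).
  rewrite A0; split => // sub.
  by have := sub (q, 1); apply; exists 1; rewrite scale1r.
have A_total y : exists r, A (y, r).
  apply: contrapT => Ay; have [B [AB GB]] := dominated_graph_extend GA Ay.
  exact: (A_max _ AB (or_intror GB)).
pose F v := xget 0 [set r | A (v, r)].
have AF v : A (v, F v) by apply: (@xgetPex _ 0 [set r | A (v, r)]); exact: A_total.
case: (GA) => Alin Ap Aq.
have Flin : linear_for *%R F.
  by move=> a x y; apply: (dominated_graph_functional GA (AF _)); exact: Alin.
pose Fl : {linear V -> R^o} :=
  HB.pack (F : V -> R^o) (GRing.isLinear.Build R V R^o *:%R F Flin).
exists Fl.
by split=> [x|]; [exact: Ap | exact: (dominated_graph_functional GA (AF _))].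
Qed.

End hahn_banach.

Lemma scaler_combD (R : numDomainType) (M : lmodType R) (t : R) (x1 x2 y1 y2 : M) :
  t *: (x1 + y1) + (1 - t) *: (x2 + y2) =
  (t *: x1 + (1 - t) *: x2) + (t *: y1 + (1 - t) *: y2).
Proof. by rewrite !scalerDr addrACA. Qed.

Lemma scaler_comb_id (R : numDomainType) (M : lmodType R) (t : R) (x : M) :
  t *: x + (1 - t) *: x = x.
Proof. by rewrite -scalerDl addrC subrK scale1r. Qed.

Lemma convex_set_addB (R : numDomainType) (M : lmodType R) (A B : set M) (c : M) :
  convex_set (A : set (convex_lmodType M)) -> convex_set (B : set (convex_lmodType M)) ->
  convex_set ([set z | exists a b, [/\ A a, B b & z = a + b - c]]
                : set (convex_lmodType M)).
Proof.
move=> /convex_setP Aconv /convex_setP Bconv.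
apply/convex_setP => _ _ t [a1 [b1 [A1 B1 ->]]] [a2 [b2 [A2 B2 ->]]] t01.
exists (t *: a1 + (1 - t) *: a2), (t *: b1 + (1 - t) *: b2).
by split; [exact: Aconv | exact: Bconv | rewrite !scaler_combD scaler_comb_id].
Qed.

Section tvs_separation.
Context (R : realType) (V : tvsType R).

Lemma tvs_affine_continuous (a : R) (b : V) : continuous (fun u : V => a *: u + b).
Proof.
move=> x; apply: (@continuous_comp _ _ _ (fun u => (a *: u, b))
  (fun z : V * V => z.1 + z.2)); last exact: add_continuous.
apply: cvg_pair => /=; last exact: cvg_cst.
apply: (@continuous_comp _ _ _ (fun u : V => ((a : R^o), u))
  (fun z : R^o * V => z.1 *: z.2)); last exact: scale_continuous.
by apply: (@cvg_pair _ _ _ (nbhs x) (nbhs (a : R^o)) (nbhs x));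
  [exact: cvg_cst | exact: cvg_id].
Qed.

Lemma nbhs0_absorbing (N : set V) : nbhs 0 N -> forall x, exists2 s : R, 0 < s & N (s *: x).
Proof.
move=> N0 x.
have cont : continuous (fun t : R^o => t *: x).
  move=> t; apply: (@continuous_comp _ _ _ (fun t : R^o => (t, x))
    (fun z : R^o * V => z.1 *: z.2)); last exact: scale_continuous.
  by apply: (@cvg_pair _ _ _ (nbhs t) (nbhs t) (nbhs x)); [exact: cvg_id | exact: cvg_cst].
have := cont 0 N; rewrite /= scale0r => /(_ N0) /nbhs_ex[e Ne].
exists (e%:num / 2); first by rewrite divr_gt0.
apply: Ne; rewrite /ball /= sub0r normrN gtr0_norm ?divr_gt0 //.
by rewrite ltr_pdivrMr // ltr_pMr // ltr1n.
Qed.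

Lemma linear_continuous_bounded_nbhs0 (F : {linear V -> R^o}) (N : set V) :
  nbhs 0 N -> (forall u, N u -> F u <= 1) -> continuous F.
Proof.
move=> N0 FN x; apply/cvgrPdist_lt => e e0.
have d0 : 0 < e / 2 by rewrite divr_gt0.
have de : e / 2 < e by rewrite ltr_pdivrMr // ltr_pMr // ltr1n.
have near_dN a : nbhs x [set y | N (a *: (y - x))].
  have := @tvs_affine_continuous a (- (a *: x)) x N; rewrite /= subrr => /(_ N0) ax.
  by near=> y; rewrite /= scalerBr; near: y; exact: ax.
have FN_scaled a y z : 0 < a -> N (a^-1 *: (y - z)) -> F y - F z <= a.
  move=> a0 /FN; rewrite linearZ linearB /= => FN1.
  have a'0 : 0 < a^-1 by rewrite invr_gt0.
  by rewrite -[a]mulr1 -(ler_pM2l a'0) mulrA mulVf ?gt_eqF // mul1r.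
near=> y.
have Fyx : F y - F x <= e / 2 by apply: FN_scaled => //; near: y; exact: near_dN.
have Fxy : F x - F y <= e / 2.
  by apply: FN_scaled => //; rewrite -opprB scalerN -scaleNr; near: y; exact: near_dN.
by rewrite ltr_norml; apply/andP; split; lra.
Unshelve. all: by end_near. Qed.

Theorem separation (L : set V) (v0 : V) :
  convex_set (L : set (convex_lmodType V)) -> nbhs v0 (~` L) ->
  exists psi : {linear V -> R^o}, continuous psi /\ forall v, L v -> psi v < psi v0.
Proof.
move=> Lconvex v0L.
have [[l0 Ll0]|L0] := pselect (L !=set0); last first.
  exists \0; split => [x|v Lv]; first exact: cvg_cst.
  by exfalso; apply: L0; exists v.
have [B B_convex [B_open B_basis]] := @locally_convex R V.
have [U [BU Uv0] UL] := B_basis v0 _ v0L.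
have Uconv := (convex_setP U).1 (B_convex U (mem_set BU)).
pose N := [set u | U (v0 - u)].
have N0 : nbhs 0 N.
  have Uv0n : nbhs ((-1) *: 0 + v0) U.
    by rewrite scaler0 add0r; apply: open_nbhs_nbhs; split => //; exact: B_open.
  have ax := @tvs_affine_continuous (-1) v0 0 U Uv0n.
  by near=> u; rewrite /N /= -scaleN1r addrC; near: u; exact: ax.
(* The Minkowski functional of E = L + N - l0 dominates the separating functional;
   v0 - l0 is outside E since v0 - N is contained in U, which misses L. *)
pose E := [set z | exists l u, [/\ L l, N u & z = l + u - l0]].
have E0 : E 0.
  by exists l0, 0; split => //; [rewrite /N /= subr0 | rewrite addr0 subrr].
have Nconvex : convex_set (N : set (convex_lmodType V)).
  apply/convex_setP => u1 u2 t N1 N2 t01; rewrite /N /=.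
  have -> : v0 - (t *: u1 + (1 - t) *: u2) = t *: (v0 - u1) + (1 - t) *: (v0 - u2).
    by rewrite scaler_combD scaler_comb_id !scalerN opprD.
  exact: Uconv.
have Econvex : convex_set (E : set (convex_lmodType V)).
  exact: convex_set_addB Lconvex Nconvex.
have Eabs x : exists2 s : R, 0 < s & E (s *: x).
  have [s s0 Ns] := nbhs0_absorbing N0 x; exists s => //.
  by exists l0, (s *: x); split => //; rewrite addrAC subrr add0r.
have notEq : ~ E (v0 - l0).
  move=> [l [u [Ll Nu /eqP]]]; rewrite subr_eq subrK => /eqP v0E.
  by apply: (UL _ Nu); rewrite v0E addrK.
have [F [Fp Fq]] := hahn_banach (minkowski_ge0 Eabs) (minkowski0 E0 Eabs)
  (@minkowskiZ _ _ E Eabs) (minkowskiD Econvex Eabs) (minkowski_ge1 E0 Econvex Eabs notEq).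
have FE z : E z -> F z <= 1 by move=> Ez; exact: le_trans (Fp z) (minkowski_le1 Ez).
exists F; split.
  apply: (linear_continuous_bounded_nbhs0 N0) => u Nu; apply: FE.
  by exists l0, u; split => //; rewrite addrAC subrr add0r.
move=> v Lv; have [s s0 Nsq] := nbhs0_absorbing N0 (v0 - l0).
have := FE _ (ex_intro _ v (ex_intro _ _ (And3 Lv Nsq erefl))).
rewrite linearB linearD linearZ Fq /= -[s%:A]/(s * 1) mulr1.
by move: Fq; rewrite linearB /=; lra.
Unshelve. all: by end_near. Qed.

End tvs_separation.

Lemma lte_fin_dense (R : realType) (a b : \bar R) :
  (a < b)%E -> exists r : R, (a < r%:E < b)%E.
Proof.
case: a b => [x| |] [y| |] //= ab.
- by exists ((x + y) / 2); rewrite !lte_fin in ab *; apply/andP; split; lra.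
- by exists (x + 1); rewrite ltry andbT lte_fin; lra.
- by exists (y - 1); rewrite ltNyr lte_fin; lra.
- by exists 0; rewrite ltNyr ltry.
Qed.

Lemma lee_fin_lt (R : realType) (a b : \bar R) :
  (forall r : R, (r%:E < a)%E -> (r%:E <= b)%E) -> (a <= b)%E.
Proof.
move=> ab; rewrite leNgt; apply/negP => /lte_fin_dense[r /andP[br ra]].
by have := ab r ra; rewrite leNgt br.
Qed.

Section log_dual_representation.
Context d (Omega : measurableType d) (R : realType) (P : probability Omega R).
Variables (C S K : set (L0 P)) (pi : L0 P -> R).
Variables (V : tvsType R) (iota : V -> L0 P) (rt : L0 P -> R).
Hypothesis CSK_setting : setting C S K pi.
Hypothesis iota_log : log_topology C iota.
Hypothesis rt_RRM : RRM K rt.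

Local Notation rho := (rhoA K rt S pi).
Local Notation eta := (MARRM S pi K rt).

Let C_pp : C `<=` @L0pp _ _ _ P. Proof. by case: CSK_setting => _ []. Qed.
Let S_pp : S `<=` @L0pp _ _ _ P. Proof. by case: CSK_setting => _ []. Qed.
Let K_pp : K `<=` @L0pp _ _ _ P. Proof. by case: CSK_setting => _ []. Qed.
Let div_K X Z : C X -> S Z -> K (divL0 X Z).
Proof. by case: CSK_setting => _ _ divK _ _; exact: divK. Qed.
Let S_C : S `<=` C. Proof. by case: CSK_setting => _ _ _ []. Qed.
Let K_C : K `<=` C. Proof. by case: CSK_setting => _ _ _ []. Qed.
Let pi_gt0 Z : S Z -> 0 < pi Z. Proof. by case: CSK_setting => _ _ _ _ pi0; exact: pi0. Qed.
Let rt_gt0 W : K W -> 0 < rt W. Proof. by case: rt_RRM => _ rt0 _ _ _; exact: rt0. Qed.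

Lemma iota_comb a b u v : iota (a *: u + b *: v) = lincombL0 a (iota u) b (iota v).
Proof.
have [_ _ iota_lin] := iota_log.
have iota0 : {ae P, forall w, iota 0 w = 0}.
  have := lincombL0E_ae (-1) (iota 0) 1 (iota 0).
  rewrite -iota_lin scaleN1r oppr0 add0r; apply: filterS => w.
  by rewrite mulN1r mul1r addNr.
apply: eqL0_ae; near=> w.
rewrite -[b *: v]addr0 !iota_lin !(near (lincombL0E_ae _ _ _ _) w) //.
by rewrite (near iota0 w) // mulr0 addr0 mul1r.
Unshelve. all: by end_near. Qed.

(* The point of V representing log Y; junk value 0 when log Y is not in the
   range of iota, i.e. when Y is not in C. *)
Definition logvec (Y : L0 P) : V := xget 0 [set v | iota v = logL0 Y].

Lemma logvecK Y : C Y -> iota (logvec Y) = logL0 Y.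
Proof.
have [_ iota_range _] := iota_log.
move=> CY; have : range iota (logL0 Y) by rewrite iota_range; exists Y.
by case=> v _ vY; apply: (@xgetPex _ 0 [set v | iota v = logL0 Y]); exists v.
Qed.

Lemma logvec_iota Y v : iota v = logL0 Y -> logvec Y = v.
Proof.
have [iota_inj _ _] := iota_log.
move=> vY; apply: iota_inj; rewrite vY.
by apply: (@xgetPex _ 0 [set v | iota v = logL0 Y]); exists v.
Qed.

Lemma logvec_exp v : logvec (expL0 (iota v)) = v.
Proof. by apply: logvec_iota; rewrite expL0K. Qed.

Lemma iota_logvecD Z W : C Z -> C W -> iota (logvec Z + logvec W) = logL0 (mulL0 Z W).
Proof.
move=> CZ CW; rewrite -[logvec Z]scale1r -[logvec W]scale1r iota_comb !logvecK //.
apply: eqL0_ae; near=> w.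
rewrite (near (lincombL0E_ae _ _ _ _) w) // (near (logL0_mul_ae (C_pp CZ) (C_pp CW)) w) //.
by rewrite !mul1r.
Unshelve. all: by end_near. Qed.

Lemma logvec_powmul X a Y b : C X -> C Y ->
  logvec (powmulL0 X a Y b) = a *: logvec X + b *: logvec Y.
Proof.
move=> CX CY; apply: logvec_iota; rewrite iota_comb !logvecK //.
apply: eqL0_ae; near=> w.
rewrite (near (lincombL0E_ae _ _ _ _) w) //.
by rewrite (near (logL0_powmul_ae _ _ (C_pp CX) (C_pp CY)) w).
Unshelve. all: by end_near. Qed.

Lemma Dset_logvec (psi : {linear V -> R^o}) : continuous psi -> Dset C iota (psi \o logvec).
Proof.
move=> psi_cont; split => [X Y a b CX CY|].
  by rewrite /= logvec_powmul // linearD !linearZ.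
by rewrite /=; under eq_fun do rewrite logvec_exp.
Qed.

Lemma rho_logM_le Z W : S Z -> Bset K rt W -> (rho (logL0 (mulL0 Z W)) <= (ln (pi Z))%:E)%E.
Proof.
move=> SZ [KW rW]; apply: ge_ereal_inf; exists (pilog pi (logL0 Z))%:E.
  exists (logL0 Z) => //; split; first by exists Z.
  rewrite (logL0_mulKl (S_pp SZ) (K_pp KW)); split; first by exists W.
  by rewrite /nu (logL0K (K_pp KW)) ln_le0.
by rewrite /pilog (logL0K (S_pp SZ)).
Qed.

Lemma ln_le_rho_log m X : C X -> 0 < m -> (m%:E <= eta X)%E ->
  ((ln m)%:E <= rho (logL0 X))%E.
Proof.
move=> CX m0 m_eta; apply: le_ereal_inf_tmp => _ [_ [[Z SZ <-] [[W KW WXZ] nuW]] <-].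
rewrite -(logL0_div (C_pp CX) (S_pp SZ)) in WXZ nuW.
have XZ_W : divL0 X Z = W := logL0_inj (K_pp (div_K CX SZ)) (K_pp KW) (esym WXZ).
rewrite -WXZ /nu (logL0K (K_pp KW)) in nuW.
have rW0 : rt W \in Num.pos by rewrite posrE rt_gt0.
have rW : rt W <= 1 by rewrite -(ler_ln rW0) ?posrE // ln1.
have piZ0 : pi Z \in Num.pos by rewrite posrE pi_gt0.
have m_piZ : m <= pi Z.
  rewrite -lee_fin; apply: le_trans m_eta _; apply: ereal_inf_lbound.
  by exists Z => //; split; rewrite // XZ_W.
by rewrite /pilog (logL0K (S_pp SZ)) lee_fin ler_ln ?posrE.
Qed.

Lemma sublevel_convex (r : R) : quasi_convex_on (logset C) rho ->
  convex_set ([set v : V | (rho (iota v) <= r%:E)%E] : set (convex_lmodType V)).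
Proof.
have [_ iota_range _] := iota_log.
move=> rho_qc; apply/convex_setP => x y t /= xr yr t01.
have Cx : logset C (iota x) by rewrite -iota_range; exists x.
have Cy : logset C (iota y) by rewrite -iota_range; exists y.
rewrite iota_comb; apply: le_trans (rho_qc _ _ _ Cx Cy t01) _.
by rewrite ge_max; apply/andP; split; [exact: xr | exact: yr].
Qed.

Definition dual_value (phi : L0 P -> R) (X : L0 P) : \bar R :=
  ereal_inf [set (pi Z)%:E | Z in
    [set Z | S Z /\ exists W, Bset K rt W /\ phi X - phi Z <= phi W]].

Definition dual_sup (X : L0 P) : \bar R :=
  ereal_sup [set dual_value phi X | phi in Dset C iota].

Lemma dual_sup_le_eta X : C X -> (dual_sup X <= eta X)%E.
Proof.
move=> CX; apply: ge_ereal_sup => _ [phi [phi_lin _] <-].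
apply: le_ereal_inf_tmp => _ [Z [SZ BXZ] <-]; apply: ereal_inf_lbound.
exists Z => //; split => //; exists (divL0 X Z); split => //.
by rewrite -(powmulL0_div (C_pp CX) (S_pp SZ)) (phi_lin _ _ _ _ CX (S_C SZ)) mul1r mulN1r.
Qed.

Lemma dual_sup_ge0 X : (0 <= dual_sup X)%E.
Proof.
apply: ereal_sup_ge; exists (dual_value (\0 \o logvec) X).
  by exists (\0 \o logvec) => //; apply: Dset_logvec; exact: cst_continuous.
by apply: le_ereal_inf_tmp => _ [Z [SZ _] <-]; rewrite lee_fin; exact/ltW/pi_gt0.
Qed.

Lemma le_dual_sup m X : C X -> 0 < m -> quasi_convex_on (logset C) rho ->
  lower_semicontinuous (rho \o iota) -> ((ln m)%:E < rho (logL0 X))%E ->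
  (m%:E <= dual_sup X)%E.
Proof.
move=> CX m0 rho_qc rho_lsc mX.
pose L := [set v : V | (rho (iota v) <= (ln m)%:E)%E].
have notL : nbhs (logvec X) (~` L).
  have [U UX Um] := rho_lsc (logvec X) (ln m) ltac:(by rewrite /= logvecK).
  by apply: filterS UX => v /Um; rewrite /L /= ltNge => /negP.
have [psi [psi_cont psi_sep]] := separation (@sublevel_convex (ln m) rho_qc) notL.
apply: ereal_sup_ge; exists (dual_value (psi \o logvec) X).
  by exists (psi \o logvec) => //; exact: Dset_logvec.
apply: le_ereal_inf_tmp => _ [Z [SZ [W [[KW rW] psiW]]] <-].
have ZW_notL : ~ L (logvec Z + logvec W).
  by move=> /psi_sep; rewrite linearD /=; lra.
have : ((ln m)%:E < (ln (pi Z))%:E)%E.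
  apply: lt_le_trans (rho_logM_le SZ (conj KW rW)).
  by rewrite -(iota_logvecD (S_C SZ) (K_C KW)) ltNge; exact/negP.
have piZ0 : pi Z \in Num.pos by rewrite posrE pi_gt0.
by rewrite lee_fin lte_fin ltr_ln ?posrE // => /ltW.
Qed.

End log_dual_representation.

Theorem mainTheorem15 (d : measure_display) (Omega : measurableType d)
  (R : realType) (P : probability Omega R)
  (C S K : set (L0 P)) (pi : L0 P -> R)
  (V : tvsType R) (iota : V -> L0 P) (rt : L0 P -> R) :
  setting C S K pi ->
  log_topology C iota ->
  RRM K rt ->
  quasi_convex_on (logset C) (rhoA K rt S pi) ->
  lower_semicontinuous (fun v : V => rhoA K rt S pi (iota v)) ->
  forall X : L0 P, C X ->
    MARRM S pi K rt X =
    ereal_sup [set ereal_inf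
                 [set (pi Z)%:E | Z in
                    [set Z | S Z /\
                       exists W, Bset K rt W /\ phi X - phi Z <= phi W]]
              | phi in Dset C iota].
Proof.
move=> CSK iota_log rt_RRM rho_qc rho_lsc X CX.
change (MARRM S pi K rt X = dual_sup C S K pi iota rt X).
apply/le_anti/andP; split; last exact: dual_sup_le_eta.
apply: lee_fin_lt => m m_eta.
have [m_le0|m_gt0] := leP m 0.
  by apply: le_trans (dual_sup_ge0 rt CSK iota_log X); rewrite lee_fin.
have [m' /andP[mm' m'_eta]] := lte_fin_dense m_eta.
have m'_gt0 : 0 < m' by rewrite -lte_fin (lt_trans _ mm') // lte_fin.
apply: le_dual_sup => //.
apply: lt_le_trans (ln_le_rho_log CSK rt_RRM CX m'_gt0 (ltW m'_eta)).
by rewrite lte_fin ltr_ln ?posrE.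
Qed.
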